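(* Let $\mathcal{A}$ be an admissibly deflation-percolating subcategory of a conflation category $\mathcal{C}$. Let $f\colon C\to A$ be a morphism in $\mathcal{C}$ with $A\in\mathcal{A}$. If $f$ is a monomorphism, then $f$ is an inflation; if $f$ is an epimorphism, then $f$ is a deflation. In particular, every morphism $X\to 0$ is a deflation.
   Context: A conflation category is an additive category together with a class of kernel-cokernel pairs $A\xrightarrow{f}B\xrightarrow{g}C$ ($f=\ker g$, $g=\operatorname{coker} f$), closed under isomorphisms, called conflations; first map an inflation, second a deflation. A non-empty full subcategory $\mathcal{A}$ of a conflation category $\mathcal{C}$ is admissibly deflation-percolating if: (A1) for every conflation $A'\rightarrowtail A\twoheadrightarrow A''$, $A\in\mathcal{A}$ iff $A',A''\in\mathcal{A}$; (A2) every morphism $C\to A$ with $A\in\mathcal{A}$ factors as a deflation $C\twoheadrightarrow A'$ followed by an inflation $A'\rightarrowtail A$ with $A'\in\mathcal{A}$; (A3) if $a\colon C\rightarrowtail D$ is an inflation and $b\colon C\twoheadrightarrow A$ a deflation with $A\in\mathcal{A}$, the pushout of $a$ along $b$ exists and yields a deflation $D\twoheadrightarrow P$ and an inflation $A\rightarrowtail P$. *)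

From HB Require Import structures.
From mathcomp Require Import all_boot all_algebra.
Set Implicit Arguments. Unset Strict Implicit. Unset Printing Implicit Defensive.
Import GRing.Theory.
Local Open Scope ring_scope.

Record AddCat := {
  Obj : Type;
  Mor : Obj -> Obj -> zmodType;
  idm : forall A, Mor A A;
  comp : forall A B C, Mor B C -> Mor A B -> Mor A C;
  comp_idl : forall A B (f : Mor A B), comp (idm B) f = f;
  comp_idr : forall A B (f : Mor A B), comp f (idm A) = f;
  comp_assoc : forall A B C D (h : Mor C D) (g : Mor B C) (f : Mor A B),
      comp h (comp g f) = comp (comp h g) f;
  comp_addl : forall A B C (g1 g2 : Mor B C) (f : Mor A B),
      comp (g1 + g2) f = comp g1 f + comp g2 f;
  comp_addr : forall A B C (g : Mor B C) (f1 f2 : Mor A B),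
      comp g (f1 + f2) = comp g f1 + comp g f2;
  zobj : Obj;
  zobj_from : forall A (f : Mor zobj A), f = 0;
  zobj_to : forall A (f : Mor A zobj), f = 0;
  bip : Obj -> Obj -> Obj;
  bip_i1 : forall A B, Mor A (bip A B);
  bip_i2 : forall A B, Mor B (bip A B);
  bip_p1 : forall A B, Mor (bip A B) A;
  bip_p2 : forall A B, Mor (bip A B) B;
  bip_p1i1 : forall A B, comp (bip_p1 A B) (bip_i1 A B) = idm A;
  bip_p2i2 : forall A B, comp (bip_p2 A B) (bip_i2 A B) = idm B;
  bip_p1i2 : forall A B, comp (bip_p1 A B) (bip_i2 A B) = 0;
  bip_p2i1 : forall A B, comp (bip_p2 A B) (bip_i1 A B) = 0;
  bip_sum : forall A B, comp (bip_i1 A B) (bip_p1 A B)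
                        + comp (bip_i2 A B) (bip_p2 A B) = idm (bip A B)
}.

Arguments idm {a} A.
Arguments comp {a A B C} g f.
Arguments zobj {a}.
Notation "g ⊚ f" := (comp g f) (at level 40, left associativity).

Section Notions.
Variable K : AddCat.
Implicit Types A B C D X : Obj K.

Definition is_mono A B (f : Mor A B) : Prop :=
  forall X (u v : Mor X A), f ⊚ u = f ⊚ v -> u = v.
Definition is_epi A B (f : Mor A B) : Prop :=
  forall X (u v : Mor B X), u ⊚ f = v ⊚ f -> u = v.
Definition is_iso A B (f : Mor A B) : Prop :=
  exists g : Mor B A, g ⊚ f = idm A /\ f ⊚ g = idm B.

Definition is_kernel A B C (f : Mor A B) (g : Mor B C) : Prop :=
  g ⊚ f = 0 /\
  forall X (h : Mor X B), g ⊚ h = 0 -> exists! u : Mor X A, f ⊚ u = h.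
Definition is_cokernel A B C (f : Mor A B) (g : Mor B C) : Prop :=
  g ⊚ f = 0 /\
  forall X (h : Mor B X), h ⊚ f = 0 -> exists! u : Mor C X, u ⊚ g = h.

Definition is_pushout C D A P (a : Mor C D) (b : Mor C A)
    (p : Mor D P) (q : Mor A P) : Prop :=
  p ⊚ a = q ⊚ b /\
  forall X (x : Mor D X) (y : Mor A X), x ⊚ a = y ⊚ b ->
    exists! u : Mor P X, u ⊚ p = x /\ u ⊚ q = y.
End Notions.

Record ConfCat := {
  ccat :> AddCat;
  conf : forall A B C : Obj ccat, Mor A B -> Mor B C -> Prop;
  conf_kc : forall A B C (f : Mor A B) (g : Mor B C),
      conf f g -> is_kernel f g /\ is_cokernel f g;
  conf_iso : forall A B C A' B' C' (f : Mor A B) (g : Mor B C)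
      (f' : Mor A' B') (g' : Mor B' C') (a : Mor A A') (b : Mor B B') (c : Mor C C'),
      conf f g -> is_iso a -> is_iso b -> is_iso c ->
      b ⊚ f = f' ⊚ a -> c ⊚ g = g' ⊚ b -> conf f' g'
}.

Arguments conf {c0 A B C} f g.

Definition inflation (K : ConfCat) (A B : Obj K) (f : Mor A B) : Prop :=
  exists C (g : Mor B C), conf f g.
Definition deflation (K : ConfCat) (B C : Obj K) (g : Mor B C) : Prop :=
  exists A (f : Mor A B), conf f g.

(** Admissibly deflation-percolating (non-empty, full) subcategory,
    given by a predicate on objects. *)
Definition adm_defl_percolating (K : ConfCat) (inA : Obj K -> Prop) : Prop :=
  (exists A, inA A) /\
  (* A1 *)
  (forall A' A A'' (f : Mor A' A) (g : Mor A A''), conf f g ->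
      (inA A <-> inA A' /\ inA A'')) /\
  (* A2 *)
  (forall C A (h : Mor C A), inA A ->
      exists A' (d : Mor C A') (i : Mor A' A),
        inA A' /\ deflation d /\ inflation i /\ h = i ⊚ d) /\
  (* A3 *)
  (forall C D A (a : Mor C D) (b : Mor C A), inflation a -> deflation b -> inA A ->
      exists P (p : Mor D P) (q : Mor A P),
        is_pushout a b p q /\ deflation p /\ inflation q).

(* Factor f : C -> A through (A2) as f = i ⊚ d with d a deflation and i an
   inflation.  A monic deflation is an isomorphism (its kernel vanishes, so
   the cokernel property yields a retraction), hence if f is monic then f is
   the inflation i precomposed with an isomorphism; dually for epimorphisms.
   Factoring 0 : A0 -> A0 for some A0 in the subcategory produces a zero
   object Z inside it; any X -> 0 is then the epimorphism X -> Z followed by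
   the isomorphism Z -> 0. *)
From mathcomp Require Import all_boot all_algebra.
Local Open Scope ring_scope.
Import GRing.Theory.
Set Implicit Arguments. Unset Strict Implicit. Unset Printing Implicit Defensive.

Section AdditiveCategory.
Variable K : AddCat.
Implicit Types A B C : Obj K.

Lemma comp0r A B C (g : Mor B C) : g ⊚ (0 : Mor A B) = 0.
Proof.
apply: (@addrI _ (g ⊚ (0 : Mor A B))).
by rewrite -comp_addr !addr0.
Qed.

Lemma comp0l A B C (f : Mor A B) : (0 : Mor B C) ⊚ f = 0.
Proof.
apply: (@addrI _ ((0 : Mor B C) ⊚ f)).
by rewrite -comp_addl !addr0.
Qed.

Lemma is_iso_idm A : is_iso (idm A).
Proof. by exists (idm A); rewrite comp_idl. Qed.

Lemma mono_compr A B C (g : Mor B C) (f : Mor A B) :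
  is_mono (g ⊚ f) -> is_mono f.
Proof. by move=> gf_mono X u v e; apply: gf_mono; rewrite -!comp_assoc e. Qed.

Lemma epi_compl A B C (g : Mor B C) (f : Mor A B) :
  is_epi (g ⊚ f) -> is_epi g.
Proof. by move=> gf_epi X u v e; apply: gf_epi; rewrite !comp_assoc e. Qed.

Lemma kernel_mono A B C (f : Mor A B) (g : Mor B C) :
  is_kernel f g -> is_mono f.
Proof.
move=> [gf0 kerf] X u v e.
have gfu0 : g ⊚ (f ⊚ u) = 0 by rewrite comp_assoc gf0 comp0l.
have [w [_ w_uniq]] := kerf X (f ⊚ u) gfu0.
by rewrite -(w_uniq u erefl) -(w_uniq v (esym e)).
Qed.

Lemma cokernel_epi A B C (f : Mor A B) (g : Mor B C) :
  is_cokernel f g -> is_epi g.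
Proof.
move=> [gf0 cokerg] X u v e.
have ugf0 : (u ⊚ g) ⊚ f = 0 by rewrite -comp_assoc gf0 comp0r.
have [w [_ w_uniq]] := cokerg X (u ⊚ g) ugf0.
by rewrite -(w_uniq u erefl) -(w_uniq v (esym e)).
Qed.

Lemma mono_cokernel_iso A B C (f : Mor A B) (g : Mor B C) :
  is_cokernel f g -> is_mono g -> is_iso g.
Proof.
move=> cokerg g_mono; have [gf0 cokerg_univ] := cokerg.
have f0 : f = 0 by apply: g_mono; rewrite gf0 comp0r.
have [r [rg _]] := cokerg_univ B (idm B) (ltac:(by rewrite f0 comp0r)).
exists r; split=> //.
apply: (cokernel_epi cokerg).
by rewrite -comp_assoc rg comp_idl comp_idr.
Qed.

Lemma epi_kernel_iso A B C (f : Mor A B) (g : Mor B C) :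
  is_kernel f g -> is_epi f -> is_iso f.
Proof.
move=> kerf f_epi; have [gf0 kerf_univ] := kerf.
have g0 : g = 0 by apply: f_epi; rewrite gf0 comp0l.
have [s [fs _]] := kerf_univ B (idm B) (ltac:(by rewrite g0 comp0l)).
exists s; split=> //.
apply: (kernel_mono kerf).
by rewrite comp_assoc fs comp_idl comp_idr.
Qed.

Lemma idm_eq0_epi A Z (f : Mor A Z) : idm Z = 0 -> is_epi f.
Proof.
move=> idZ0 X u v _.
by rewrite -(comp_idr u) -(comp_idr v) idZ0 !comp0r.
Qed.

Lemma idm_eq0_iso A B (f : Mor A B) : idm A = 0 -> idm B = 0 -> is_iso f.
Proof.
move=> idA0 idB0; exists 0.
by rewrite idA0 idB0 comp0l comp0r.
Qed.

End AdditiveCategory.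

Section ConflationCategory.
Variable K : ConfCat.
Implicit Types A B C : Obj K.

Lemma inflation_mono A B (f : Mor A B) : inflation f -> is_mono f.
Proof. by move=> [C [g fg]]; apply: kernel_mono (proj1 (conf_kc fg)). Qed.

Lemma deflation_epi A B (g : Mor A B) : deflation g -> is_epi g.
Proof. by move=> [C [f fg]]; apply: cokernel_epi (proj2 (conf_kc fg)). Qed.

Lemma mono_deflation_iso A B (d : Mor A B) : deflation d -> is_mono d -> is_iso d.
Proof. by move=> [C [k kd]]; apply: mono_cokernel_iso (proj2 (conf_kc kd)). Qed.

Lemma epi_inflation_iso A B (i : Mor A B) : inflation i -> is_epi i -> is_iso i.
Proof. by move=> [C [g ig]]; apply: epi_kernel_iso (proj1 (conf_kc ig)). Qed.

Lemma inflation_comp_iso A B C (i : Mor B C) (a : Mor A B) :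
  inflation i -> is_iso a -> inflation (i ⊚ a).
Proof.
move=> [D [g ig]] [b [ba ab]]; exists D, g.
apply: (conf_iso (a := b) (b := idm C) (c := idm D) ig).
- by exists a.
- exact: is_iso_idm.
- exact: is_iso_idm.
- by rewrite comp_idl -comp_assoc ab comp_idr.
- by rewrite comp_idl comp_idr.
Qed.

Lemma iso_comp_deflation A B C (c : Mor B C) (d : Mor A B) :
  is_iso c -> deflation d -> deflation (c ⊚ d).
Proof.
move=> c_iso [D [k kd]]; exists D, k.
apply: (conf_iso (a := idm D) (b := idm A) (c := c) kd).
- exact: is_iso_idm.
- exact: is_iso_idm.
- exact: c_iso.
- by rewrite comp_idl comp_idr.
- by rewrite comp_idr.
Qed.

Variable inA : Obj K -> Prop.
Hypothesis percolating : adm_defl_percolating inA.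

Lemma percolating_mono_inflation C A (f : Mor C A) :
  inA A -> is_mono f -> inflation f.
Proof.
move=> inA_A; have [_ [_ [factor _]]] := percolating.
have [A' [d [i [_ [d_defl [i_infl ->]]]]]] := factor C A f inA_A.
move=> /mono_compr d_mono.
exact: inflation_comp_iso i_infl (mono_deflation_iso d_defl d_mono).
Qed.

Lemma percolating_epi_deflation C A (f : Mor C A) :
  inA A -> is_epi f -> deflation f.
Proof.
move=> inA_A; have [_ [_ [factor _]]] := percolating.
have [A' [d [i [_ [d_defl [i_infl ->]]]]]] := factor C A f inA_A.
move=> /epi_compl i_epi.
exact: iso_comp_deflation (epi_inflation_iso i_infl i_epi) d_defl.
Qed.

Lemma percolating_zero_object : exists Z, inA Z /\ idm Z = 0.
Proof.
have [[A0 inA_A0] [_ [factor _]]] := percolating.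
have [Z [d [i [inA_Z [d_defl [i_infl i_d0]]]]]] := factor A0 A0 0 inA_A0.
have d0 : d = 0 by apply: (inflation_mono i_infl); rewrite -i_d0 comp0r.
exists Z; split=> //.
by apply: (deflation_epi d_defl); rewrite comp_idl d0 comp0l.
Qed.

End ConflationCategory.

Theorem mainTheorem14 (K : ConfCat) (inA : Obj K -> Prop) :
  adm_defl_percolating inA ->
  (forall (C A : Obj K) (f : Mor C A), inA A ->
     (is_mono f -> inflation f) /\ (is_epi f -> deflation f)) /\
  (forall (X : Obj K) (f : Mor X zobj), deflation f).
Proof.
move=> percolating; split.
  move=> C A f inA_A; split.
    exact: (percolating_mono_inflation percolating inA_A).
  exact: (percolating_epi_deflation percolating inA_A).
move=> X f.
have [Z [inA_Z idZ0]] := percolating_zero_object percolating.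
have Z_iso : is_iso (0 : Mor Z zobj) := idm_eq0_iso _ idZ0 (zobj_to _).
rewrite (zobj_to f) -(comp0r _ (0 : Mor Z zobj)).
apply: iso_comp_deflation Z_iso _.
exact: (percolating_epi_deflation percolating inA_Z (idm_eq0_epi idZ0)).
Qed.
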